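(* Let $G$ be a connected graph, let $e=\{x,y\}$ and $f=\{u,v\}$ be edges of $G$, and consider the edges $e_{\bar{x}}=\{\bar{x},\overline{xy}\}$ and $f_{\bar{u}}=\{\bar{u},\overline{uv}\}$ of the full subdivision $S(G)$. If $e_{\bar{x}}\,\Theta^\ast_{S(G)}\,f_{\bar{u}}$, then $e\,\Theta^\ast_G\,f$.
   Context: For a connected graph $H$ with shortest-path distance $d_H$, two edges $\{x,y\}$ and $\{u,v\}$ of $H$ are in relation $\Theta_H$ if $d_H(x,u)+d_H(y,v)\neq d_H(x,v)+d_H(y,u)$; $\Theta^\ast_H$ denotes the transitive closure of $\Theta_H$ (an equivalence relation on $E(H)$). The full subdivision $S(G)$ is obtained by subdividing every edge of $G$ exactly once; the vertex of $S(G)$ corresponding to a vertex $x$ of $G$ is denoted $\bar{x}$, and the vertex subdividing the edge $\{x,y\}$ is denoted $\overline{xy}$. For $e=\{x,y\}\in E(G)$, $e_{\bar{x}}=\{\bar{x},\overline{xy}\}$ and $e_{\bar{y}}=\{\bar{y},\overline{xy}\}$. *)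

From Stdlib Require Import Relation_Definitions Relation_Operators.
From mathcomp Require Import all_boot.
Set Implicit Arguments. Unset Strict Implicit. Unset Printing Implicit Defensive.

Section Graphs.
Variable V : finType.
Variable adj : rel V.

Definition simple_graph : Prop := symmetric adj /\ irreflexive adj.
Definition connected_graph : Prop := forall x y : V, connect adj x y.

Fixpoint ball (n : nat) (x : V) : {set V} :=
  match n with
  | 0 => [set x]
  | n'.+1 => ball n' x :|: [set z | [exists w in ball n' x, adj w z]]
  end.

(* shortest-path distance: least n with y in ball n x (distances in a
   connected graph on |V| vertices are < |V|) *)
Definition dist (x y : V) : nat := find (fun n => y \in ball n x) (iota 0 #|V|).

(* Theta relation on (oriented) edges, i.e. ordered pairs (x,y) with adj x y.
   The defining condition is invariant under reversing both edges. *)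
Definition Theta (e f : V * V) : Prop :=
  [/\ adj e.1 e.2, adj f.1 f.2 &
      dist e.1 f.1 + dist e.2 f.2 <> dist e.1 f.2 + dist e.2 f.1].

Definition ThetaStar : relation (V * V) := clos_trans (V * V) Theta.

(* Full subdivision S(G): vertices are those of G plus one vertex per edge
   of G (an edge {x,y} being represented by the 2-set [set x; y]). *)
Definition is_edge (A : {set V}) : bool :=
  [exists x, exists y, adj x y && (A == [set x; y])].

Definition edgeT := {A : {set V} | is_edge A}.

Definition SV : finType := (V + edgeT)%type.

Definition sadj : rel SV := fun a b =>
  match a, b with
  | inl x, inr A => x \in val A
  | inr A, inl x => x \in val A
  | _, _ => false
  end.

Lemma is_edge_pair (x y : V) : adj x y -> is_edge [set x; y].
Proof. by move=> h; apply/existsP; exists x; apply/existsP; exists y; rewrite h eqxx. Qed.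

Definition svert (x : V) : SV := inl x.
Definition smid (x y : V) (h : adj x y) : SV :=
  inr (exist (fun A => is_edge A) [set x; y] (is_edge_pair h)).

End Graphs.

From Stdlib Require Import Relation_Definitions Relation_Operators.
From mathcomp Require Import all_boot.
From mathcomp Require Import zify.
Set Implicit Arguments. Unset Strict Implicit. Unset Printing Implicit Defensive.

(* In S(G) the distance between two original vertices is twice their distance
   in G, and the distance from a vertex (or a subdivision vertex) to the
   subdivision vertex of {c,d} is one more than the smaller of its distances
   to c and d. Since the distances in G between the ends of two edges differ
   by at most one, these formulas show that for two half-edges (a, ab) and
   (c, cd) the sums defining Theta coincide in S(G) as soon as they coincide
   for (a,b) and (c,d) in G. Every edge of S(G) is a half of an edge of G, so
   a Theta chain in S(G) projects to a Theta chain in G. *)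

Section Distance.
Variables (T : finType) (e : rel T).

Lemma mem_ball_path n x z :
  z \in ball e n x <-> exists p, [/\ path e x p, last x p = z & size p <= n].
Proof.
elim: n z => [|n IH] z /=.
  rewrite in_set1; split; first by move/eqP->; exists [::].
  by case=> [[|? ?] [_ <- //]].
rewrite in_setU inE; split.
  case/orP => [/IH [p [pp lp sp]] | /existsP [w /andP [wb awz]]].
    by exists p; split => //; apply: leqW.
  have [p [pp lp sp]] := (IH w).1 wb.
  by exists (rcons p z); rewrite rcons_path last_rcons size_rcons pp lp awz.
case=> p [pp lp sp]; case: (leqP (size p) n) => h.
  by apply/orP; left; apply/IH; exists p.
move: pp lp sp h; case/lastP: p => [|p w] //.
rewrite rcons_path last_rcons size_rcons => /andP [pp ew] lw sp h; subst w.
apply/orP; right; apply/existsP; exists (last x p); rewrite ew andbT.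
by apply/IH; exists p; split => //; lia.
Qed.

Lemma dist_path_le x p : path e x p -> dist e x (last x p) <= size p.
Proof.
move=> pp; have pb : last x p \in ball e (size p) x by apply/mem_ball_path; exists p.
rewrite /dist; case: (leqP #|T| (size p)) => h.
  by apply: leq_trans (find_size _ _) _; rewrite size_iota.
case: leqP => // /(before_find 0).
by rewrite nth_iota // add0n pb.
Qed.

Lemma dist_xx x : dist e x x = 0.
Proof. by apply/eqP; rewrite -leqn0; apply: (@dist_path_le x [::]). Qed.

Lemma dist_adj_le1 x z : e x z -> dist e x z <= 1.
Proof. by move=> exz; apply: (@dist_path_le x [:: z]); rewrite /= exz. Qed.

Hypothesis e_conn : connected_graph e.

Lemma dist_shortest_path x z :
  exists p, [/\ path e x p, last x p = z & size p <= dist e x z].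
Proof.
apply/mem_ball_path; rewrite /dist.
have [p pp ->] := connectP (e_conn x z).
have [p' pp' up' _] := shortenP pp.
have sz : size p' < #|T|.
  by move: (max_card (mem (x :: p'))); move/card_uniqP: up' ->.
have hb : has (fun n => last x p' \in ball e n x) (iota 0 #|T|).
  by apply/hasP; exists (size p'); rewrite ?mem_iota //; apply/mem_ball_path; exists p'.
have := nth_find 0 hb; rewrite nth_iota //.
by move: hb; rewrite has_find size_iota.
Qed.

Lemma dist_eq0 x z : dist e x z = 0 -> x = z.
Proof. by move=> d0; have [[|? ?] [_ lp]] := dist_shortest_path x z; rewrite d0. Qed.

Lemma dist_triangle x w z : dist e x z <= dist e x w + dist e w z.
Proof.
have [p [pp <- sp]] := dist_shortest_path x w.
have [q [pq <- sq]] := dist_shortest_path (last x p) z.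
have := @dist_path_le x (p ++ q).
by rewrite cat_path pp pq last_cat size_cat => /(_ isT); lia.
Qed.

Lemma dist_adj_succ x w z : e w z -> dist e x z <= dist e x w + 1.
Proof.
by move=> ewz; apply: leq_trans (dist_triangle x w z) _; rewrite leq_add2l dist_adj_le1.
Qed.

Lemma dist_last_step x z :
  z != x -> exists w, e w z /\ (dist e x w).+1 = dist e x z.
Proof.
move=> zx; have [p [pp lp sp]] := dist_shortest_path x z.
move: pp lp sp; case/lastP: p => [_ /= zx'|p w]; first by rewrite zx' eqxx in zx.
rewrite rcons_path last_rcons size_rcons => /andP [pp ew] <- sp.
exists (last x p); split => //.
have := dist_path_le pp; have := dist_adj_succ x ew.
by move: sp; move: (dist e x w) (dist e x (last x p)) => *; lia.
Qed.

Hypothesis e_sym : symmetric e.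

Lemma path_rev x p :
  path e x p -> exists q, [/\ path e (last x p) q, last (last x p) q = x & size q = size p].
Proof.
elim: p x => [|y p IH] x /=; first by exists [::].
case/andP=> exy /IH [q [pq lq sq]]; exists (rcons q x).
by rewrite rcons_path last_rcons size_rcons pq lq e_sym exy sq.
Qed.

Lemma dist_sym x z : dist e x z = dist e z x.
Proof.
have le_rev a b : dist e a b <= dist e b a.
  have [p [pp lp sp]] := dist_shortest_path b a.
  have [q [pq lq sq]] := path_rev pp.
  by rewrite lp in pq lq; have := dist_path_le pq; rewrite lq sq; lia.
by apply/eqP; rewrite eqn_leq !le_rev.
Qed.

Lemma Theta_flipl s t : Theta e s t -> Theta e (s.2, s.1) t.
Proof.
case: s t => [s1 s2] [t1 t2] [/= h1 h2 h3]; split => //=; first by rewrite e_sym.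
by move: h3; move: (dist e s1 t1) (dist e s2 t2) (dist e s1 t2) (dist e s2 t1) => *; lia.
Qed.

Lemma Theta_flipr s t : Theta e s t -> Theta e s (t.2, t.1).
Proof.
case: s t => [s1 s2] [t1 t2] [/= h1 h2 h3]; split => //=; first by rewrite e_sym.
by move: h3; move: (dist e s1 t1) (dist e s2 t2) (dist e s1 t2) (dist e s2 t1) => *; lia.
Qed.

Hypothesis e_irr : irreflexive e.

Lemma dist_adj x z : e x z -> dist e x z = 1.
Proof.
move=> exz; have := dist_adj_le1 exz.
case: (dist e x z) (@dist_eq0 x z) => [|[|n]] // /(_ erefl) xz.
by rewrite xz e_irr in exz.
Qed.

Lemma Theta_refl x z : e x z -> Theta e (x, z) (x, z).
Proof.
by move=> exz; split; rewrite //= !dist_xx dist_adj.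
Qed.

End Distance.

Lemma clos_trans_Theta_adj (T : finType) (e : rel T) s t :
  clos_trans _ (Theta e) s t -> e t.1 t.2.
Proof. by elim => [? ? [] | ]. Qed.

Section Subdivision.
Variables (V : finType) (adj : rel V).
Hypotheses (adj_sym : symmetric adj) (adj_irr : irreflexive adj).
Hypothesis adj_conn : connected_graph adj.

Local Notation adjS := (@sadj V adj).
Local Notation distS := (dist adjS).

Lemma edgeT_ends (A : edgeT adj) : exists a b, adj a b /\ val A = [set a; b].
Proof.
case: A => A /= /existsP [a /existsP [b /andP [ab /eqP ->]]].
by exists a, b.
Qed.

Lemma edgeT_other_end (A : edgeT adj) a :
  a \in val A -> exists b, adj a b /\ val A = [set a; b].
Proof.
have [p [q [pq ->]]] := edgeT_ends A.
rewrite !inE => /orP [] /eqP ->; first by exists q.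
by exists p; rewrite adj_sym setUC.
Qed.

Lemma sadj_sym : symmetric adjS.
Proof. by case=> [a|A] [b|B]. Qed.

Lemma subdivision_connected : connected_graph adjS.
Proof.
have vv a b : connect adjS (inl a) (inl b).
  have [p pp ->] := connectP (adj_conn a b).
  elim: p a pp => [|y p IH] a /=; first by rewrite connect0.
  case/andP=> ay /IH; apply: connect_trans.
  by apply: (@connect_trans _ _ (smid ay)); apply: connect1; rewrite /= !inE eqxx ?orbT.
have vS a t : connect adjS (inl a) t.
  case: t => [b|B]; first exact: vv.
  have [b [c [_ hB]]] := edgeT_ends B.
  by apply: connect_trans (vv a b) _; apply: connect1; rewrite /= hB !inE eqxx.
case=> [a|A] t; first exact: vS.
have [b [c [_ hA]]] := edgeT_ends A.
apply: (@connect_trans _ _ (inl b)); last exact: vS.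
by apply: connect1; rewrite /= hA !inE eqxx.
Qed.

Lemma distS_path_le a p :
  path adj a p -> distS (inl a) (inl (last a p)) <= 2 * size p.
Proof.
elim: p a => [|y p IH] a /=; first by rewrite dist_xx.
case/andP=> ay /IH le_yp.
apply: leq_trans (dist_triangle subdivision_connected _ (inl y) _) _.
have : distS (inl a) (inl y) <= 2.
  by apply: (@dist_path_le _ _ (inl a) [:: smid ay; inl y]); rewrite /= !inE !eqxx ?orbT.
by move: le_yp; move: (distS (inl a) (inl y)) (distS (inl y) _) => *; lia.
Qed.

Lemma distS_vertices_le a b : distS (inl a) (inl b) <= 2 * dist adj a b.
Proof.
have [p [pp <- sp]] := dist_shortest_path adj_conn a b.
by apply: leq_trans (distS_path_le pp) _; rewrite leq_mul2l sp orbT.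
Qed.

Lemma subdivision_path_size_ge a P : path adjS (inl a) P ->
  match last (inl a) P return Prop with
  | inl z => 2 * dist adj a z <= size P
  | inr A => exists2 p, p \in val A & (2 * dist adj a p).+1 <= size P
  end.
Proof.
elim/last_ind: P => [|P s IH] /=; first by rewrite dist_xx.
rewrite rcons_path last_rcons size_rcons => /andP [/IH].
case: (last (inl a) P) => [z|A]; case: s => [w|B] //= le_z hs.
  by exists z => //; lia.
case: le_z => p pA le_p; have [q [pq hA]] := edgeT_other_end pA.
suff : dist adj a w <= dist adj a p + 1 by lia.
move: hs; rewrite hA !inE => /orP [] /eqP ->; first exact: leq_addr.
exact: dist_adj_succ pq.
Qed.

Lemma distS_vertices a b : distS (inl a) (inl b) = 2 * dist adj a b.
Proof.
apply/eqP; rewrite eqn_leq distS_vertices_le /=.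
have [P [pP lP sP]] := dist_shortest_path subdivision_connected (inl a) (inl b).
by have := subdivision_path_size_ge pP; rewrite lP => /leq_trans; apply.
Qed.

Lemma distS_mid s (C : edgeT adj) c d : val C = [set c; d] -> s != inr C ->
  distS s (inr C) = 1 + minn (distS s (inl c)) (distS s (inl d)).
Proof.
move=> hC sC; have hconn := subdivision_connected.
have le_c : distS s (inr C) <= distS s (inl c) + 1.
  by apply: (dist_adj_succ hconn); rewrite /= hC !inE eqxx.
have le_d : distS s (inr C) <= distS s (inl d) + 1.
  by apply: (dist_adj_succ hconn); rewrite /= hC !inE eqxx ?orbT.
have [[z|B] [//= hz step]] : exists w, adjS w (inr C) /\ (distS s w).+1 = distS s (inr C).
  by apply: (dist_last_step hconn); rewrite eq_sym.
by move: hz step le_c le_d; rewrite /= hC !inE => /orP [] /eqP ->; lia.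
Qed.

Lemma distS_vertex_mid (A : edgeT adj) a b z : val A = [set a; b] ->
  distS (inl z) (inr A) = 1 + minn (2 * dist adj z a) (2 * dist adj z b).
Proof. by move=> hA; rewrite (distS_mid hA) // !distS_vertices. Qed.

Lemma distS_mid_vertex (A : edgeT adj) a b z : val A = [set a; b] ->
  distS (inr A) (inl z) = 1 + minn (2 * dist adj a z) (2 * dist adj b z).
Proof.
move=> hA; rewrite (dist_sym subdivision_connected sadj_sym) (distS_vertex_mid z hA).
by rewrite !(dist_sym adj_conn adj_sym z).
Qed.

Lemma Theta_subdivision_half (A C : edgeT adj) a b c d :
  val A = [set a; b] -> val C = [set c; d] -> adj a b -> adj c d ->
  Theta adjS (inl a, inr A) (inl c, inr C) -> Theta adj (a, b) (c, d).
Proof.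
move=> hA hC ab cd hT; have [eAC | AC] := eqVneq A C.
  subst C.
  have ncd : c != d by apply: contraTneq cd => ->; rewrite adj_irr.
  have : d \in [set a; b] by rewrite -hA hC !inE eqxx orbT.
  have : c \in [set a; b] by rewrite -hA hC !inE eqxx.
  rewrite !inE => /orP [] /eqP ? /orP [] /eqP ?; subst c d; rewrite ?eqxx // in ncd.
    exact: (Theta_refl adj_conn adj_irr ab).
  exact: (Theta_flipr adj_sym (Theta_refl adj_conn adj_irr ab)).
have AC' : inr A != inr C :> SV adj by apply: contra_neq AC => -[].
case: hT => _ _ /=; rewrite distS_vertices (distS_vertex_mid a hC).
rewrite (distS_mid_vertex c hA) (distS_mid hC AC') !(distS_mid_vertex _ hA).
move=> nT; split => //= T_eq; apply: nT.
have ba : adj b a by rewrite adj_sym.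
have dc : adj d c by rewrite adj_sym.
have lip x w z : adj w z -> dist adj x z <= dist adj x w + 1.
  exact: dist_adj_succ.
have lip' x w z : adj w z -> dist adj z x <= dist adj w x + 1.
  by rewrite !(dist_sym adj_conn adj_sym _ x); apply: lip.
have := lip a _ _ cd; have := lip a _ _ dc; have := lip b _ _ cd; have := lip b _ _ dc.
have := lip' c _ _ ab; have := lip' c _ _ ba; have := lip' d _ _ ab; have := lip' d _ _ ba.
by move: T_eq; lia.
Qed.

Definition half_of (s : SV adj * SV adj) (g : V * V) : Prop :=
  adj g.1 g.2 /\ exists A : edgeT adj, val A = [set g.1; g.2] /\
    (s = (inl g.1, inr A) \/ s = (inr A, inl g.2)).

Lemma half_of_exists s : adjS s.1 s.2 -> exists g, half_of s g.
Proof.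
case: s => [[a|A] [b|B]] //= hs.
  have [c [ac hB]] := edgeT_other_end hs.
  by exists (a, c); split => //; exists B; split => //; left.
have [c [bc hA]] := edgeT_other_end hs.
exists (c, b); split; rewrite /= 1?adj_sym //.
by exists A; split; [rewrite hA setUC | right].
Qed.

Lemma Theta_subdivision s t g h :
  Theta adjS s t -> half_of s g -> half_of t h -> Theta adj g h.
Proof.
have flipS := Theta_flipl sadj_sym; have flipS' := Theta_flipr sadj_sym.
have flip := Theta_flipl adj_sym; have flip' := Theta_flipr adj_sym.
case: g h => [a b] [c d] hT [/= ab [A [hA hs]]] [/= cd [C [hC ht]]].
have hA' : val A = [set b; a] by rewrite setUC.
have hC' : val C = [set d; c] by rewrite setUC.
have ba : adj b a by rewrite adj_sym.
have dc : adj d c by rewrite adj_sym.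
case: hs ht hT => -> [] -> hT.
- exact: Theta_subdivision_half hA hC ab cd hT.
- exact: flip' _ (d, c) (Theta_subdivision_half hA hC' ab dc (flipS' _ _ hT)).
- exact: flip (b, a) _ (Theta_subdivision_half hA' hC ba cd (flipS _ _ hT)).
- apply: flip (b, a) _ (flip' _ (d, c) _).
  exact: Theta_subdivision_half hA' hC' ba dc (flipS _ _ (flipS' _ _ hT)).
Qed.

Lemma ThetaStar_subdivision s t g h :
  ThetaStar adjS s t -> half_of s g -> half_of t h -> ThetaStar adj g h.
Proof.
move=> st; elim: st g h => [s0 t0 sTt | s0 r t0 sr IHsr rt IHrt] g h sg th.
  exact/t_step/(Theta_subdivision sTt sg th).
have [k rk] := half_of_exists (clos_trans_Theta_adj sr).
exact: t_trans (IHsr _ _ sg rk) (IHrt _ _ rk th).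
Qed.

End Subdivision.

Theorem corollary3p2 (V : finType) (adj : rel V)
  (Hsimple : simple_graph adj) (Hconn : connected_graph adj)
  (x y u v : V) (hxy : adj x y) (huv : adj u v) :
  ThetaStar (@sadj V adj)
    (svert adj x, smid hxy) (svert adj u, smid huv) ->
  ThetaStar adj (x, y) (u, v).
Proof.
have [adj_sym adj_irr] := Hsimple.
have half_smid a b (ab : adj a b) : half_of (svert adj a, smid ab) (a, b).
  by split=> //; exists (exist _ [set a; b] (is_edge_pair ab)); split => //; left.
by move=> /(ThetaStar_subdivision adj_sym adj_irr Hconn); apply; apply: half_smid.
Qed.
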